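(* Let $G$ be a $d$-regular bipartite graph on vertex set $V$, $|V|=n$, whose second largest adjacency eigenvalue is at most $\lambda$, where $0<\lambda<d/2$. Then every nonempty $U\subseteq V$ with $|U|<\frac{\lambda^2n}{d^2}$ satisfies $$|N(U)|>\frac{(d-2\lambda)^2}{4\lambda^2}|U|.$$
   Context: $N(U)$ is the set of vertices not in $U$ having a neighbor in $U$. *)

From HB Require Import structures.
From mathcomp Require Import all_boot all_order all_algebra.
Set Implicit Arguments. Unset Strict Implicit. Unset Printing Implicit Defensive.
Import Order.TTheory GRing.Theory Num.Theory.
Local Open Scope ring_scope.

Definition simple_graph (V : finType) (adj : rel V) : Prop :=
  symmetric adj /\ irreflexive adj.

Definition regular (V : finType) (adj : rel V) (d : nat) : Prop :=
  forall v : V, #|[set u | adj v u]| = d.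

Definition bipartite (V : finType) (adj : rel V) : Prop :=
  exists A : {set V}, forall u v : V, adj u v -> (u \in A) != (v \in A).

Definition adj_matrix (R : nzRingType) (V : finType) (adj : rel V)
  : 'M[R]_#|V| :=
  \matrix_(i, j) (adj (enum_val i) (enum_val j))%:R.

(* Eigenvalues with multiplicity: the sequence s of roots of the
   characteristic polynomial.  "The second largest eigenvalue is at most l":
   sorting s non-increasingly, the entry of index 1 is <= l. *)
Definition second_eigenvalue_le (R : rcfType) (n : nat) (A : 'M[R]_n) (l : R)
  : Prop :=
  exists s : seq R,
    char_poly A = \prod_(x <- s) ('X - x%:P) /\
    nth 0 (sort (fun x y : R => y <= x) s) 1 <= l.

Definition nbhd (V : finType) (adj : rel V) (U : {set V}) : {set V} :=
  [set v | (v \notin U) && [exists u in U, adj v u]].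

(* Let A be the adjacency matrix of a d-regular bipartite graph on n vertices
   whose second eigenvalue is at most l < d/2, let U be a nonempty vertex set
   and let h(v) be the number of neighbours of v in U, so that h is the image
   of the indicator vector x of U under A and Q := sum_v h(v)^2 = |x A|^2.
   - Spectral step.  Diagonalising the real symmetric A in an orthonormal
     eigenbasis over R[i], all eigenvalues but d (eigenvector: the constant
     vector) and -d (eigenvector: the +-1 colouring of the two sides; the
     spectrum is symmetric since A is conjugate to -A) lie in [-l, l].  Hence
     Q <= l^2 |U| + (d^2 - l^2) (<x,1>^2 + <x,sign>^2) / n, and this is
     < 3 l^2 |U| when |U| < l^2 n / d^2.
   - Counting step.  h vanishes outside N(U) u U and sums to d |U|, so by
     Cauchy-Schwarz (d |U|)^2 <= (|N(U)| + |U|) Q.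
   Together, |N(U)| > (d^2 / (3 l^2) - 1) |U| >= (d - 2l)^2 / (4 l^2) |U|. *)

From HB Require Import structures.
From mathcomp Require Import all_boot all_order all_algebra.
From mathcomp Require Import complex.
From mathcomp Require Import ring lra.
Import Order.TTheory GRing.Theory Num.Theory.
Local Open Scope ring_scope.

Lemma char_poly_conj {F : fieldType} {n} (M P : 'M[F]_n) : P \in unitmx ->
  char_poly (invmx P *m M *m P) = char_poly M.
Proof.
move=> Pu; rewrite /char_poly /char_poly_mx.
set Pi := map_mx polyC (invmx P); set Pp := map_mx polyC P.
have PiPp : Pi *m Pp = 1%:M by rewrite -map_mxM mulVmx // map_mx1.
have -> : 'X%:M - map_mx polyC (invmx P *m M *m P) =
          Pi *m ('X%:M - map_mx polyC M) *m Pp.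
  rewrite mulmxBr mulmxBl !map_mxM -/Pi -/Pp; congr (_ - _).
  by rewrite scalar_mxC -mulmxA PiPp mulmx1.
by rewrite !det_mulmx mulrAC -det_mulmx PiPp det1 mul1r.
Qed.

Lemma count_map_le1_eq (T : finType) (S : Type) (f : T -> S) (p : pred S) j k :
  (count p [seq f i | i <- enum T] <= 1)%N -> p (f j) -> p (f k) -> j = k.
Proof.
rewrite count_map enumT => h.
have : (#|[pred i | p (f i)]| <= 1)%N by rewrite cardE /enum_mem size_filter.
by move=> /card_le1_eqP le1 pj pk; apply: le1; rewrite inE.
Qed.

Lemma sum_two_exceptions (R : numDomainType) (I : finType) (w m : I -> R)
    (L : R) (a b : I) :
  a != b -> (forall j, 0 <= w j) -> (forall j, j != a -> j != b -> m j <= L) ->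
  \sum_j w j * m j <= L * \sum_j w j + (m a - L) * w a + (m b - L) * w b.
Proof.
move=> ab w0 mL.
have split (F : I -> R) :
    \sum_j F j = F a + F b + \sum_(j | (j != a) && (j != b)) F j.
  by rewrite (bigD1 a) //= (bigD1 b) 1?eq_sym //= addrA.
have rest : \sum_(j | (j != a) && (j != b)) w j * m j <=
            L * \sum_(j | (j != a) && (j != b)) w j.
  rewrite mulr_sumr; apply: ler_sum => j /andP[ja jb].
  by rewrite mulrC; apply: ler_wpM2r; [exact: w0 | exact: mL].
rewrite !split; set S := \sum_(_ | _) w _.
have -> : L * (w a + w b + S) + (m a - L) * w a + (m b - L) * w b =
          w a * m a + w b * m b + L * S by ring.
by rewrite lerD2l.
Qed.

Lemma count_gt_second_le1 {R : realDomainType} {s : seq R} {l : R} :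
  nth 0 (sort (fun x y : R => y <= x) s) 1 <= l -> (count (fun x => (l < x)%R) s <= 1)%N.
Proof.
have ge_trans : transitive (fun x y : R => y <= x) by move=> a b c ba cb; apply: le_trans cb ba.
have ge_total : total (fun x y : R => y <= x) by move=> a b; apply: le_total.
rewrite -(permP (permEl (perm_sort (fun x y : R => y <= x) s))).
have := sort_sorted ge_total s.
case: (sort _ s) => [|x0 [|x1 t]] //= sorted_s second; first by case: (l < x0).
have /andP[_ /(order_path_min ge_trans) /allP x1_ge] := sorted_s.
suff -> : count (fun x => l < x) t = 0%N by rewrite (le_gtF second) /=; case: (l < x0).
apply/eqP; rewrite -leqn0 leqNgt -has_count; apply/hasPn => y yt.
by rewrite -leNgt (le_trans (x1_ge _ yt)).
Qed.

Lemma sum_sqr_le_card {R : realFieldType} {I : finType} (S : {set I}) (f : I -> R) :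
  (\sum_(i in S) f i) ^+ 2 <= #|S|%:R * \sum_(i in S) f i ^+ 2.
Proof.
have sq_diff_ge0 : 0 <= \sum_(i in S) \sum_(j in S) (f i - f j) ^+ 2.
  by apply: sumr_ge0 => i _; apply: sumr_ge0 => j _; apply: sqr_ge0.
have sq_diff_expand : \sum_(i in S) \sum_(j in S) (f i - f j) ^+ 2 =
   \sum_(i in S) (f i ^+ 2 *+ #|S| + \sum_(j in S) f j ^+ 2 - 2 * (f i * \sum_(j in S) f j)).
  apply: eq_bigr => i _.
  rewrite mulr_sumr mulr_sumr -sumr_const -big_split -sumrB /=.
  by apply: eq_bigr => j _; ring.
rewrite sq_diff_expand sumrB big_split /= -mulr_sumr -mulr_suml sumr_const sumrMnl
  in sq_diff_ge0.
rewrite mulr_natl -subr_ge0 expr2; lra.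
Qed.

(* With N < l^2 n / d^2, the two exceptional terms of the spectral bound are
   dominated by the bulk term, so Q < 3 l^2 N. *)
Lemma sqnorm_bound_small {R : realFieldType} {N n d l Q : R} :
  0 < l -> l < d -> 0 < N -> 0 < n -> N < l ^+ 2 * n / d ^+ 2 ->
  Q <= l ^+ 2 * N + (d ^+ 2 - l ^+ 2) * (N ^+ 2 / n + N ^+ 2 / n) ->
  Q < 3 * (l ^+ 2 * N).
Proof.
move=> l0 ld N0 n0 small hQ.
have d2 : 0 < d ^+ 2 by rewrite exprn_gt0 // (lt_trans l0).
have t_small : N ^+ 2 / n * d ^+ 2 < l ^+ 2 * N.
  rewrite -(ltr_pM2r n0) (_ : _ * _ * n = N * (N * d ^+ 2)); last by field; lra.
  by rewrite (_ : _ * _ * n = N * (l ^+ 2 * n)) ?ltr_pM2l -?ltr_pdivlMr //; ring.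
have t0 : 0 <= N ^+ 2 / n * l ^+ 2 by rewrite mulr_ge0 ?divr_ge0 ?exprn_ge0 ?ltW.
move: hQ t_small t0; set t := N ^+ 2 / n.
rewrite (_ : (d ^+ 2 - l ^+ 2) * (t + t) = 2 * (t * d ^+ 2) - 2 * (t * l ^+ 2)); last by ring.
lra.
Qed.

(* Combining (d N)^2 <= (K + N) Q with Q < 3 l^2 N gives
   K > (d^2 / (3 l^2) - 1) N, which exceeds (d - 2l)^2 / (4 l^2) N
   because d^2 + 12 d l - 24 l^2 > 0 when d > 2 l. *)
Lemma expansion_from_sqnorm {R : realFieldType} {N K d l Q : R} :
  0 < l -> 2 * l < d -> 0 < N -> 0 <= K ->
  (d * N) ^+ 2 <= (K + N) * Q -> Q < 3 * (l ^+ 2 * N) ->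
  (d - 2 * l) ^+ 2 / (4 * l ^+ 2) * N < K.
Proof.
move=> l0 ld N0 K0 hCS hQ.
have KN : 0 < K + N by lra.
have h1 : d ^+ 2 * N < 3 * l ^+ 2 * (K + N).
  rewrite -(ltr_pM2r N0) (_ : d ^+ 2 * N * N = (d * N) ^+ 2); last by ring.
  rewrite (_ : _ * _ * N = (K + N) * (3 * (l ^+ 2 * N))); last by ring.
  by apply: le_lt_trans hCS _; rewrite ltr_pM2l.
rewrite mulrAC ltr_pdivrMr; last by rewrite mulr_gt0 ?exprn_gt0.
have : 0 <= (d ^+ 2 + 12 * d * l - 24 * l ^+ 2) * N by apply: mulr_ge0; nra.
nra.
Qed.

Section DotProduct.
Local Open Scope sesquilinear_scope.
Context {C : numClosedFieldType} {n : nat}.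
Implicit Types (u v : 'rV[C]_n).

Lemma dotmx_sum u v : dotmx u v = \sum_j u 0 j * (v 0 j)^*.
Proof. by rewrite dotmxE mxE; apply: eq_bigr => j _; rewrite !mxE. Qed.

Lemma dotmx_self u : dotmx u u = \sum_j `|u 0 j| ^+ 2.
Proof. by rewrite dotmx_sum; apply: eq_bigr => j _; rewrite normCK. Qed.

End DotProduct.

Section HermitianSpectrum.
Local Open Scope sesquilinear_scope.
Context {C : numClosedFieldType} {n : nat}.
Variable A : 'M[C]_n.
Hypothesis A_herm : A \is hermsymmx.
Implicit Types (u v e x : 'rV[C]_n) (c l : C).

Local Notation P := (spectralmx A).
Local Notation D := (spectral_diag A).
Local Notation coords v := (v *m P^t*).

Definition spectrum : seq C := [seq D 0 j | j <- enum 'I_n].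

Lemma spectral_decomp : A = P^t* *m diag_mx D *m P.
Proof.
rewrite -invmx_unitary ?spectral_unitarymx //.
exact/orthomx_spectralP/hermitian_normalmx.
Qed.

Lemma coords_mulmx v : coords (v *m A) = coords v *m diag_mx D.
Proof. by rewrite {1}spectral_decomp !mulmxA mulmxtVK ?spectral_unitarymx. Qed.

Lemma dotmx_coords u v : dotmx (coords u) (coords v) = dotmx u v.
Proof.
by rewrite !dotmxE trmx_mul map_mxM trmxCK mulmxA mulmxKtV ?spectral_unitarymx.
Qed.

Lemma coords_eq0 v : (coords v == 0) = (v == 0).
Proof.
apply/eqP/eqP => [v0|->]; last by rewrite mul0mx.
by rewrite -(mulmxKtV v (spectral_unitarymx A)) // v0 mul0mx.
Qed.

Lemma char_poly_diag_conj (E : 'rV[C]_n) :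
  char_poly (P^t* *m diag_mx E *m P) = \prod_j ('X - (E 0 j)%:P).
Proof.
rewrite -invmx_unitary ?spectral_unitarymx // char_poly_conj ?spectral_unit //.
rewrite char_poly_trig ?diag_mx_is_trig //.
by apply: eq_bigr => j _; rewrite mxE eqxx mulr1n.
Qed.

Lemma char_poly_spectrum : char_poly A = \prod_(z <- spectrum) ('X - z%:P).
Proof. by rewrite {1}spectral_decomp char_poly_diag_conj big_map big_enum. Qed.

Lemma char_poly_opp_spectrum :
  char_poly (- A) = \prod_(z <- spectrum) ('X - (- z)%:P).
Proof.
have -> : - A = P^t* *m diag_mx (- D) *m P.
  by rewrite {1}spectral_decomp linearN /= mulmxN mulNmx.
rewrite char_poly_diag_conj big_map big_enum /=.
by apply: eq_bigr => j _; rewrite mxE.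
Qed.

Lemma count_spectrum_opp (l : C) : char_poly (- A) = char_poly A ->
  count (fun z => z < - l) spectrum = count (fun z => l < z) spectrum.
Proof.
move=> chN; have sym : perm_eq [seq - z | z <- spectrum] spectrum.
  by apply: prod_XsubC_eq; rewrite big_map -char_poly_opp_spectrum chN char_poly_spectrum.
by rewrite -(permP sym) count_map; apply: eq_count => z /=; rewrite ltrN2.
Qed.

Lemma eigvec_coords e c j : e *m A = c *: e -> coords e 0 j != 0 -> D 0 j = c.
Proof.
move=> eA nz; have := congr1 (fun M : 'rV[C]_n => M 0 j) (coords_mulmx e).
rewrite eA -scalemxAl mul_mx_diag [LHS]mxE [RHS]mxE => ce.
by apply: (mulIf nz); rewrite mulrC -ce.
Qed.

Lemma eigvec_concentrated (p : pred C) e c :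
  (count p spectrum <= 1)%N -> p c -> e *m A = c *: e -> e != 0 ->
  exists a, [/\ D 0 a = c, coords e 0 a != 0 &
                forall j, j != a -> coords e 0 j = 0].
Proof.
move=> cnt pc eA en0.
have [a nza|all0] := pickP (fun j => coords e 0 j != 0); last first.
  suff : coords e == 0 by rewrite coords_eq0 (negbTE en0).
  by apply/eqP/rowP => j; rewrite [RHS]mxE; apply/eqP/negbFE/(all0 j).
exists a; split=> // [|j]; first exact: eigvec_coords _ _ _ eA nza.
apply: contraNeq => nzj; apply/eqP.
apply: (@count_map_le1_eq _ _ (fun j => D 0 j) p _ _ cnt).
  by rewrite (eigvec_coords _ _ _ eA nzj).
by rewrite (eigvec_coords _ _ _ eA nza).
Qed.

Lemma dotmx_concentrated x e a : coords e 0 a != 0 ->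
  (forall j, j != a -> coords e 0 j = 0) ->
  `|dotmx x e| ^+ 2 / dotmx e e = `|coords x 0 a| ^+ 2.
Proof.
move=> nza za.
have -> : dotmx x e = coords x 0 a * (coords e 0 a)^*.
  rewrite -dotmx_coords dotmx_sum (bigD1 a) //= big1 ?addr0 // => j ja.
  by rewrite za // conjC0 mulr0.
have -> : dotmx e e = `|coords e 0 a| ^+ 2.
  rewrite -dotmx_coords dotmx_self (bigD1 a) //= big1 ?addr0 // => j ja.
  by rewrite za // normr0 expr0n.
by rewrite normrM norm_conjC exprMn mulfK // expf_neq0 // normr_eq0.
Qed.

(* If at most one eigenvalue exceeds l and the spectrum
   is symmetric, with eigenvectors e1 for c1 > l and e2 for c2 < -l, then all
   other eigenvalues lie in [-l, l], whence |x A|^2 is at most l^2 |x|^2 plus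
   the excess of c1^2 and c2^2 over l^2 on the projections onto e1 and e2. *)
Lemma hermitian_sqnorm_bound l c1 c2 e1 e2 x :
  0 <= l -> (count (fun z : C => (l < z)%R) spectrum <= 1)%N ->
  char_poly (- A) = char_poly A ->
  e1 *m A = c1 *: e1 -> e1 != 0 -> l < c1 ->
  e2 *m A = c2 *: e2 -> e2 != 0 -> c2 < - l ->
  dotmx (x *m A) (x *m A) <= l ^+ 2 * dotmx x x
    + (`|c1| ^+ 2 - l ^+ 2) * (`|dotmx x e1| ^+ 2 / dotmx e1 e1)
    + (`|c2| ^+ 2 - l ^+ 2) * (`|dotmx x e2| ^+ 2 / dotmx e2 e2).
Proof.
move=> l0 cnt1 chN eA1 e1n0 lc1 eA2 e2n0 c2l.
have cnt2 : (count (fun z : C => (z < - l)%R) spectrum <= 1)%N.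
  by rewrite count_spectrum_opp.
have [a [Da nza za]] := eigvec_concentrated _ _ _ cnt1 lc1 eA1 e1n0.
have [b [Db nzb zb]] := eigvec_concentrated _ _ _ cnt2 c2l eA2 e2n0.
have ab : a != b.
  have c21 : c2 < c1.
    by rewrite (lt_trans c2l) // (le_lt_trans _ lc1) // (le_trans _ l0) // oppr_le0.
  by apply: contraTneq c21 => ab; rewrite -Da -Db ab ltxx.
have Dreal j : D 0 j \is Num.real.
  by have /mxOverP := hermitian_spectral_diag_real A_herm; apply.
have lreal : l \is Num.real by rewrite ger0_real.
have small j : j != a -> j != b -> `|D 0 j| ^+ 2 <= l ^+ 2.
  move=> ja jb; apply: lerXn2r; rewrite ?nnegrE ?normr_ge0 //.
  rewrite real_ler_norml //; apply/andP; split.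
    rewrite real_leNgt ?rpredN //; apply: contra jb => ltj; apply/eqP.
    by apply: (@count_map_le1_eq _ _ (fun j => D 0 j) _ _ _ cnt2) => //=; rewrite Db.
  rewrite real_leNgt //; apply: contra ja => ltj; apply/eqP.
  by apply: (@count_map_le1_eq _ _ (fun j => D 0 j) _ _ _ cnt1) => //=; rewrite Da.
rewrite (dotmx_concentrated _ _ _ nza za) (dotmx_concentrated _ _ _ nzb zb).
rewrite -[dotmx (x *m A) _]dotmx_coords -[dotmx x x]dotmx_coords coords_mulmx.
rewrite !dotmx_self -Da -Db.
under eq_bigr => j _ do rewrite mul_mx_diag mxE normrM exprMn.
by apply: sum_two_exceptions => // j; rewrite exprn_ge0.
Qed.

End HermitianSpectrum.

Definition rdot {R : numDomainType} {n} (u v : 'rV[R]_n) : R := \sum_j u 0 j * v 0 j.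

Section RealSymmetric.
Local Open Scope sesquilinear_scope.
Context {R : rcfType} {n : nat}.
Local Notation rc := (real_complex R).
Implicit Types (u v x e : 'rV[R]_n) (l c : R).

Lemma conj_real_complex (r : R) : (rc r)^* = rc r.
Proof. by apply: conj_Creal; rewrite complex_real. Qed.

Lemma sqr_norm_real_complex (r : R) : `|rc r| ^+ 2 = rc (r ^+ 2).
Proof. by rewrite normCK conj_real_complex rmorphXn expr2. Qed.

Lemma rdot_complex u v : rc (rdot u v) = dotmx (map_mx rc u) (map_mx rc v).
Proof.
rewrite dotmx_sum rmorph_sum; apply: eq_bigr => j _.
by rewrite !mxE rmorphM conj_real_complex.
Qed.

Lemma symmetric_sqnorm_bound (A : 'M[R]_n) (s : seq R) l c1 c2 e1 e2 x :
  A^T = A -> char_poly A = \prod_(y <- s) ('X - y%:P) ->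
  char_poly (- A) = char_poly A -> (count (fun y => (l < y)%R) s <= 1)%N ->
  0 <= l ->
  e1 *m A = c1 *: e1 -> e1 != 0 -> l < c1 ->
  e2 *m A = c2 *: e2 -> e2 != 0 -> c2 < - l ->
  rdot (x *m A) (x *m A) <= l ^+ 2 * rdot x x
    + (c1 ^+ 2 - l ^+ 2) * (rdot x e1 ^+ 2 / rdot e1 e1)
    + (c2 ^+ 2 - l ^+ 2) * (rdot x e2 ^+ 2 / rdot e2 e2).
Proof.
move=> Asym chA chN cnt l0 eA1 e1n0 lc1 eA2 e2n0 c2l.
have herm : map_mx rc A \is hermsymmx.
  apply/is_hermitianmxP; rewrite expr0 scale1r; apply/matrixP => i j.
  by rewrite !mxE conj_real_complex -[in LHS]Asym mxE.
have spec : perm_eq (spectrum (map_mx rc A)) [seq rc y | y <- s].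
  apply: prod_XsubC_eq; rewrite -char_poly_spectrum // -map_char_poly chA.
  by rewrite rmorph_prod big_map; apply: eq_bigr => y _; exact: map_polyXsubC.
have cntC : (count (fun z => (rc l < z)%R) (spectrum (map_mx rc A)) <= 1)%N.
  by rewrite (permP spec) count_map (eq_count (a2 := fun y => (l < y)%R)) // => y /=; rewrite ltcR.
have eigC e c : e *m A = c *: e -> map_mx rc e *m map_mx rc A = rc c *: map_mx rc e.
  by move=> eA; rewrite -map_mxM eA map_mxZ.
have nzC e : e != 0 -> map_mx rc e != 0 by rewrite map_mx_eq0.
have chNC : char_poly (- map_mx rc A) = char_poly (map_mx rc A).
  by rewrite -map_mxN -!map_char_poly chN.
have := hermitian_sqnorm_bound _ herm (rc l) (rc c1) (rc c2) _ _ (map_mx rc x) _ cntC chNC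
  (eigC _ _ eA1) (nzC _ e1n0) _ (eigC _ _ eA2) (nzC _ e2n0).
rewrite lecR ltcR -rmorphN ltcR => /(_ l0 lc1 c2l).
rewrite -map_mxM -!rdot_complex !sqr_norm_real_complex -rmorphXn.
by rewrite -!fmorph_div -!rmorphB -!rmorphM -!rmorphD lecR.
Qed.

End RealSymmetric.

Definition vertex_vec {R : nzRingType} {V : finType} (f : V -> R) : 'rV[R]_#|V| :=
  \row_j f (enum_val j).

Section VertexVectors.
Context {R : numDomainType} {V : finType}.
Implicit Types (f g : V -> R).

Lemma sum_enum_val (F : V -> R) : \sum_(j < #|V|) F (enum_val j) = \sum_v F v.
Proof. by rewrite -(big_enum_val (A := V)). Qed.

Lemma rdot_vertex_vec f g :
  rdot (vertex_vec f) (vertex_vec g) = \sum_v f v * g v.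
Proof.
rewrite /rdot -(sum_enum_val (fun v => f v * g v)).
by apply: eq_bigr => j _; rewrite !mxE.
Qed.

Lemma vertex_vec_mul_adj (adj : rel V) f :
  vertex_vec f *m adj_matrix R adj = vertex_vec (fun v => \sum_u f u * (adj u v)%:R).
Proof.
apply/rowP => j; rewrite !mxE -(sum_enum_val (fun u => f u * _)).
by apply: eq_bigr => i _; rewrite !mxE.
Qed.

Lemma vertex_vec_neq0 f v : f v != 0 -> vertex_vec f != 0.
Proof.
apply: contraNneq => /rowP /(_ (enum_rank v)).
by rewrite !mxE enum_rankK => ->.
Qed.

Lemma sum_indicator (S : {set V}) : \sum_v ((v \in S)%:R : R) = #|S|%:R.
Proof. by rewrite -sumr_const [RHS]big_mkcond; apply: eq_bigr => v _; case: (v \in S). Qed.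

End VertexVectors.

Section RegularBipartite.
Context {R : rcfType} {V : finType} {adj : rel V} {d : nat}.
Hypotheses (adj_sym : symmetric adj) (adj_reg : regular adj d).
Variable side : {set V}.
Hypothesis adj_bip : forall u v, adj u v -> (u \in side) != (v \in side).

Local Notation A := (adj_matrix R adj).

Lemma adj_matrix_sym : A^T = A.
Proof. by apply/matrixP => i j; rewrite !mxE adj_sym. Qed.

Lemma degree_sum v : \sum_u (adj u v)%:R = d%:R :> R.
Proof.
rewrite -(adj_reg v) -sumr_const [RHS]big_mkcond /=; apply: eq_bigr => u _.
by rewrite inE adj_sym; case: (adj v u).
Qed.

Lemma ones_eigvec :
  vertex_vec (fun _ => 1) *m A = d%:R *: vertex_vec (fun _ => 1 : R).
Proof.
rewrite vertex_vec_mul_adj; apply/rowP => j; rewrite !mxE mulr1.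
by under eq_bigr do rewrite mul1r; rewrite degree_sum.
Qed.

Definition side_sign (v : V) : R := if v \in side then 1 else -1.

Lemma side_sign_adj {u v} : adj u v -> side_sign u = - side_sign v.
Proof.
move/adj_bip; rewrite /side_sign.
by case: (u \in side); case: (v \in side); rewrite ?opprK.
Qed.

Lemma side_sign_sqr v : side_sign v * side_sign v = 1.
Proof. by rewrite /side_sign; case: ifP; rewrite ?mulr1 ?mulrNN ?mulr1. Qed.

Lemma sign_eigvec :
  vertex_vec side_sign *m A = - d%:R *: vertex_vec side_sign.
Proof.
rewrite vertex_vec_mul_adj; apply/rowP => j; rewrite !mxE.
rewrite -(degree_sum (enum_val j)) mulNr mulr_suml -sumrN; apply: eq_bigr => u _.
case: (boolP (adj u _)) => [a|_]; last by rewrite mulr0 mul0r oppr0.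
by rewrite (side_sign_adj a) mulr1 mul1r.
Qed.

(* Conjugating A by the diagonal sign matrix negates it, so the spectrum of a
   bipartite graph is symmetric. *)
Lemma char_poly_opp_adj : char_poly (- A) = char_poly A.
Proof.
pose S := diag_mx (vertex_vec side_sign).
have SS : S *m S = 1%:M.
  apply/matrixP => i j; rewrite mul_diag_mx !mxE; case: (eqVneq i j) => [->|_].
    by rewrite !mulr1n side_sign_sqr.
  by rewrite !mulr0n mulr0.
have [S_unit _] := mulmx1_unit SS.
have S_inv : invmx S = S by rewrite -[LHS]mulmx1 -SS mulmxA mulVmx // mul1mx.
rewrite -(char_poly_conj A _ S_unit) S_inv; congr char_poly.
apply/matrixP => i j; rewrite mul_mx_diag mul_diag_mx !mxE.
case: (boolP (adj _ _)) => [a|_]; last by rewrite mulr0 mul0r oppr0.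
by rewrite (side_sign_adj a) !mulr1n mulr1 mulNr side_sign_sqr.
Qed.

Variable U : {set V}.

Definition hits (v : V) : R := \sum_u (u \in U)%:R * (adj u v)%:R.

Lemma hits_outside v : v \notin nbhd adj U :|: U -> hits v = 0.
Proof.
rewrite in_setU negb_or => /andP[vN vU]; apply: big1 => u _.
case: (boolP (u \in U)) => [uU|_]; last by rewrite mul0r.
case: (boolP (adj u v)) => [a|_]; last by rewrite mulr0.
move: vN; rewrite inE vU /=; case/existsP.
by exists u; rewrite uU adj_sym.
Qed.

(* Double counting of the edges leaving U. *)
Lemma sum_hits : \sum_v hits v = d%:R * #|U|%:R.
Proof.
have deg u : \sum_v (adj u v)%:R = d%:R :> R.
  by rewrite -(degree_sum u); apply: eq_bigr => v _; rewrite adj_sym.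
rewrite exchange_big /=; under eq_bigr => u _ do rewrite -mulr_sumr deg.
by rewrite -mulr_suml sum_indicator mulrC.
Qed.

Lemma hits_cauchy_schwarz :
  (d%:R * #|U|%:R) ^+ 2 <= (#|nbhd adj U|%:R + #|U|%:R) * \sum_v hits v ^+ 2.
Proof.
pose T := nbhd adj U :|: U.
have onT (F : R -> R) : F 0 = 0 -> \sum_(v in T) F (hits v) = \sum_v F (hits v).
  move=> F0; rewrite big_mkcond; apply: eq_bigr => v _.
  by case: ifPn => // /hits_outside ->.
rewrite -sum_hits -(onT id) // -(onT (fun y => y ^+ 2)) ?expr0n //.
apply: le_trans (sum_sqr_le_card T hits) _; apply: ler_wpM2r.
  by apply: sumr_ge0 => v _; apply: sqr_ge0.
by rewrite -natrD ler_nat leq_card_setU.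
Qed.

(* The spectral bound applied to the indicator vector of U, with the two
   exceptional eigenvectors being the constant and the side-sign vectors. *)
Lemma hits_sqnorm_bound (s : seq R) (l : R) :
  char_poly A = \prod_(y <- s) ('X - y%:P) -> (count (fun y => (l < y)%R) s <= 1)%N ->
  0 <= l -> l < d%:R -> U != set0 ->
  \sum_v hits v ^+ 2 <= l ^+ 2 * #|U|%:R
    + (d%:R ^+ 2 - l ^+ 2) * (#|U|%:R ^+ 2 / #|V|%:R + #|U|%:R ^+ 2 / #|V|%:R).
Proof.
move=> chA cnt l0 ld /set0Pn[u0 u0U].
pose ind v : R := (v \in U)%:R.
have ind_sqr v : ind v * ind v = ind v by rewrite /ind; case: (v \in U); rewrite ?mulr1 ?mulr0.
have sign_nz : side_sign u0 != 0.
  by rewrite /side_sign; case: ifP; rewrite ?oppr_eq0 oner_neq0.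
have dl : - (d%:R : R) < - l by rewrite ltrN2.
have := symmetric_sqnorm_bound _ _ _ _ _ _ _ (vertex_vec ind) adj_matrix_sym chA char_poly_opp_adj
  cnt l0 ones_eigvec (vertex_vec_neq0 _ u0 (oner_neq0 _)) ld
  sign_eigvec (vertex_vec_neq0 _ u0 sign_nz) dl.
have sum_ind : \sum_v ind v = #|U|%:R := sum_indicator U.
have norm_sign v : `|side_sign v| = 1.
  by rewrite /side_sign; case: ifP; rewrite ?normrN normr1.
have cross : (\sum_v ind v * side_sign v) ^+ 2 <= #|U|%:R ^+ 2.
  rewrite -real_normK ?num_real //; apply: lerXn2r; rewrite ?nnegrE ?ler0n //.
  rewrite -sum_ind; apply: le_trans (ler_norm_sum _ _ _) _; apply: ler_sum => v _.
  by rewrite normrM norm_sign mulr1 ger0_norm ?ler0n.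
rewrite vertex_vec_mul_adj !rdot_vertex_vec sqrrN.
under eq_bigr do rewrite -expr2.
under [\sum_v ind v * ind v]eq_bigr do rewrite ind_sqr.
under [\sum_v ind v * 1]eq_bigr do rewrite mulr1.
under [\sum_v 1 * 1]eq_bigr do rewrite mulr1.
under [\sum_v side_sign v * side_sign v]eq_bigr do rewrite side_sign_sqr.
rewrite sum_ind sumr_const -[_ *+ #|V|]mulr_natl mulr1.
move/le_trans; apply; rewrite mulrDr addrA lerD2l; apply: ler_wpM2l.
  by rewrite subr_ge0 ler_pXn2r ?nnegrE ?ler0n // ltW.
by apply: ler_wpM2r; rewrite ?invr_ge0 ?ler0n.
Qed.

End RegularBipartite.

Theorem corollary10 (R : rcfType) (V : finType) (adj : rel V) (d : nat) (l : R) :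
  simple_graph adj -> regular adj d -> bipartite adj ->
  second_eigenvalue_le (adj_matrix R adj) l ->
  0 < l -> l < d%:R / 2 ->
  forall U : {set V}, U != set0 ->
    #|U|%:R < l ^+ 2 * #|V|%:R / d%:R ^+ 2 ->
    #|nbhd adj U|%:R > (d%:R - 2 * l) ^+ 2 / (4 * l ^+ 2) * #|U|%:R.
Proof.
move=> [adj_sym _] adj_reg [side adj_bip] [s [chA second]] l0 ld U U0 U_small.
have N0 : 0 < #|U|%:R :> R by rewrite ltr0n card_gt0.
have n0 : 0 < #|V|%:R :> R by rewrite ltr0n (leq_trans _ (max_card U)) // card_gt0.
have ld' : l < d%:R by lra.
have sqnorm := hits_sqnorm_bound adj_sym adj_reg _ adj_bip U s l chA
  (count_gt_second_le1 second) (ltW l0) ld' U0.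
apply: (expansion_from_sqnorm l0 _ N0 (ler0n _ _) (hits_cauchy_schwarz adj_sym adj_reg U)).
  by lra.
exact: sqnorm_bound_small l0 ld' N0 n0 U_small sqnorm.
Qed.
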